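(* Let $(H,\mathcal F_\bullet H,\mathcal R)$ be a filtered Rota–Baxter Hopf algebra. Then $\mathcal R(P(H))\subset P(H)$ and $(P(H),\mathcal F_\bullet H\cap P(H),\mathcal R|_{P(H)})$ is a filtered Rota–Baxter Lie algebra, where $P(H)$ is the Lie algebra of primitive elements with the filtration $\mathcal F_nP(H)=\mathcal F_nH\cap P(H)$, $n\ge1$.
   Context: A filtered Hopf algebra is a Hopf algebra $H$ (over a field of characteristic zero) with subspaces $H=\mathcal F_0H\supset\mathcal F_1H\supset\cdots$ such that all Hopf structure maps preserve filtrations (with $\mathcal F_n(V\otimes W)=\sum_{i+j=n}\mathcal F_iV\otimes\mathcal F_jW$, $\mathcal F_0\mathbf k=\mathbf k$, $\mathcal F_n\mathbf k=0$ for $n\ge1$) and $\ker\epsilon=\mathcal F_1H$. A Rota–Baxter Hopf algebra is a cocommutative Hopf algebra $H$ with a coalgebra homomorphism $\mathcal R:H\to H$ with $\mathcal R(h)\mathcal R(t)=\mathcal R\big(h_{(1)}\mathcal R(h_{(2)})\,t\,S(\mathcal R(h_{(3)}))\big)$ for all $h,t\in H$; it is filtered if $H$ is a filtered Hopf algebra and $\mathcal R(\mathcal F_nH)\subset\mathcal F_nH$ for all $n\ge0$. $P(H)=\{x:\Delta(x)=x\otimes1+1\otimes x\}$ with the commutator bracket. A filtered Rota–Baxter Lie algebra is a Lie algebra $\mathfrak g$ with subspaces $\mathfrak g=\mathcal F_1\mathfrak g\supset\mathcal F_2\mathfrak g\supset\cdots$, $[\mathcal F_n\mathfrak g,\mathcal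 F_m\mathfrak g]\subset\mathcal F_{n+m}\mathfrak g$, together with a linear map $R$ satisfying $[R(x),R(y)]=R([R(x),y]+[x,R(y)]+[x,y])$ and $R(\mathcal F_n\mathfrak g)\subset\mathcal F_n\mathfrak g$. *)

(* Hopf algebras over a field K, with tensor products given
   abstractly by their universal property. *)
From HB Require Import structures.
From mathcomp Require Import all_boot all_algebra.
From Stdlib Require Import ClassicalEpsilon.

Set Implicit Arguments.
Unset Strict Implicit.
Unset Printing Implicit Defensive.

Import GRing.Theory.
Local Open Scope ring_scope.

Section HopfDefs.
Variable K : fieldType.

Definition lin (V U : lmodType K) (g : V -> U) : Prop :=
  forall (a : K) (x y : V), g (a *: x + y) = a *: g x + g y.

Definition bilin (V W U : lmodType K) (f : V -> W -> U) : Prop :=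
  (forall w, lin (fun v => f v w)) /\ (forall v, lin (f v)).

Record tensor_product (V W : lmodType K) := TensorProduct {
  tp_carrier :> lmodType K;
  tp_mul : V -> W -> tp_carrier;
  tp_bilin : bilin tp_mul;
  tp_univ : forall (U : lmodType K) (f : V -> W -> U), bilin f ->
    exists! g : tp_carrier -> U, lin g /\ forall v w, g (tp_mul v w) = f v w
}.

(* The linear map T -> U induced by a bilinear map f (junk if f is not bilinear). *)
Definition tlift (V W : lmodType K) (T : tensor_product V W) (U : lmodType K)
    (f : V -> W -> U) : T -> U :=
  epsilon (inhabits (fun _ : T => (0 : U)))
    (fun g : T -> U => lin g /\ forall v w, g (tp_mul T v w) = f v w).
Arguments tlift {V W} T {U} f.
Arguments tp_mul {V W} t.

Variable H : algType K.

Definition subspace (V : lmodType K) (P : V -> Prop) : Prop :=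
  P 0 /\ forall (a : K) (x y : V), P x -> P y -> P (a *: x + y).

Section WithTensors.
Variable T2 : tensor_product H H.
Variable T3 : tensor_product T2 H.

(* multiplication on H (x) H : (a (x) b)(c (x) d) = ac (x) bd *)
Definition tmul2 (s t : T2) : T2 :=
  tlift T2 (fun a b => tlift T2 (fun c d => tp_mul T2 (a * c) (b * d)) t) s.

(* (Delta (x) id) o Delta *)
Definition Delta2 (Delta : H -> T2) (h : H) : T3 :=
  tlift T2 (fun x y => tp_mul T3 (Delta x) y) (Delta h).

(* (id (x) Delta) o Delta, viewed in (H (x) H) (x) H *)
Definition Delta2' (Delta : H -> T2) (h : H) : T3 :=
  tlift T2 (fun x y => tlift T2 (fun y1 y2 => tp_mul T3 (tp_mul T2 x y1) y2) (Delta y))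
    (Delta h).

Definition tlift3 (U : lmodType K) (phi : H -> H -> H -> U) : T3 -> U :=
  tlift T3 (fun s c => tlift T2 (fun a b => phi a b c) s).

Definition is_hopf (Delta : H -> T2) (eps : H -> K) (S : H -> H) : Prop :=
  lin Delta /\
  (forall (a : K) x y, eps (a *: x + y) = a * eps x + eps y) /\
  lin S /\
  (forall h, Delta2 Delta h = Delta2' Delta h) /\
  (forall h, tlift T2 (fun x y => eps x *: y) (Delta h) = h) /\
  (forall h, tlift T2 (fun x y => eps y *: x) (Delta h) = h) /\
  Delta 1 = tp_mul T2 1 1 /\
  (forall x y, Delta (x * y) = tmul2 (Delta x) (Delta y)) /\
  eps 1 = 1 /\
  (forall x y, eps (x * y) = eps x * eps y) /\
  (forall h, tlift T2 (fun x y => S x * y) (Delta h) = (eps h)%:A) /\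
  (forall h, tlift T2 (fun x y => x * S y) (Delta h) = (eps h)%:A).

Definition is_cocommutative (Delta : H -> T2) : Prop :=
  forall h, tlift T2 (fun x y => tp_mul T2 y x) (Delta h) = Delta h.

(* F_n (H (x) H) = sum_{i+j=n} F_i H (x) F_j H *)
Definition tens_filt (F : nat -> H -> Prop) (n : nat) (t : T2) : Prop :=
  exists s : seq (H * H * nat),
    t = \sum_(p <- s) tp_mul T2 p.1.1 p.1.2 /\
    forall p, p \in s -> (p.2 <= n)%N /\ F p.2 p.1.1 /\ F (n - p.2)%N p.1.2.

Definition is_filtered_hopf (Delta : H -> T2) (eps : H -> K) (S : H -> H)
    (F : nat -> H -> Prop) : Prop :=
  is_hopf Delta eps S /\
  (forall n, subspace (F n)) /\
  (forall h, F 0%N h) /\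
  (forall n h, F n.+1 h -> F n h) /\
  (forall i j x y, F i x -> F j y -> F (i + j)%N (x * y)) /\
  (forall n h, F n h -> tens_filt F n (Delta h)) /\
  (forall n h, (1 <= n)%N -> F n h -> eps h = 0) /\
  (forall n h, F n h -> F n (S h)) /\
  (forall h, F 1%N h <-> eps h = 0).

Definition is_RB_hopf (Delta : H -> T2) (eps : H -> K) (S : H -> H)
    (R : H -> H) : Prop :=
  is_hopf Delta eps S /\ is_cocommutative Delta /\
  lin R /\
  (forall h, Delta (R h) = tlift T2 (fun x y => tp_mul T2 (R x) (R y)) (Delta h)) /\
  (forall h, eps (R h) = eps h) /\
  (forall h t, R h * R t =
     R (tlift3 (fun a b c => a * R b * t * S (R c)) (Delta2 Delta h))).

Definition is_filtered_RB_hopf (Delta : H -> T2) (eps : H -> K) (S : H -> H)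
    (F : nat -> H -> Prop) (R : H -> H) : Prop :=
  is_filtered_hopf Delta eps S F /\ is_RB_hopf Delta eps S R /\
  (forall n h, F n h -> F n (R h)).

Definition primitive (Delta : H -> T2) (x : H) : Prop :=
  Delta x = tp_mul T2 x 1 + tp_mul T2 1 x.

End WithTensors.

Definition comm (x y : H) : H := x * y - y * x.

(* (g, Fg, R) is a filtered Rota-Baxter Lie algebra, where g is a subspace of H
   with the commutator bracket, Fg n (n >= 1) its filtration, and R restricted to g. *)
Definition is_filtered_RB_Lie_sub (g : H -> Prop) (Fg : nat -> H -> Prop)
    (R : H -> H) : Prop :=
  subspace g /\
  (forall x y, g x -> g y -> g (comm x y)) /\
  (forall n, (1 <= n)%N -> subspace (Fg n) /\ forall x, Fg n x -> g x) /\
  (forall x, g x -> Fg 1%N x) /\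
  (forall n x, (1 <= n)%N -> Fg n.+1 x -> Fg n x) /\
  (forall n m x y, (1 <= n)%N -> (1 <= m)%N -> Fg n x -> Fg m y ->
     Fg (n + m)%N (comm x y)) /\
  (forall x, g x -> g (R x)) /\
  (forall (a : K) x y, g x -> g y -> R (a *: x + y) = a *: R x + R y) /\
  (forall x y, g x -> g y ->
     comm (R x) (R y) = R (comm (R x) y + comm x (R y) + comm x y)) /\
  (forall n x, (1 <= n)%N -> Fg n x -> Fg n (R x)).

End HopfDefs.

(** For primitive x the coproducts Δx = x⊗1 + 1⊗x and Δ²x = x⊗1⊗1 + 1⊗x⊗1 + 1⊗1⊗x
    reduce the Hopf identities to ε(x) = 0 and S(x) = -x.  Since R is a coalgebra map,
    R(1) is group-like, hence a unit, and the Rota–Baxter identity at h = t = 1 makes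
    it idempotent, so R(1) = 1; consequently R(x) is again primitive.  For primitive
    x, y the Rota–Baxter identity then reads R(x)R(y) = R(xy + R(x)y - yR(x)), and
    antisymmetrising gives the Lie Rota–Baxter identity.  Commutators of primitives
    are primitive, and the filtration of P(H) is inherited from that of H because
    ker ε = F₁H. *)
From HB Require Import structures.
From mathcomp Require Import all_boot all_algebra.
From Stdlib Require Import ClassicalEpsilon FunctionalExtensionality.

Set Implicit Arguments.
Unset Strict Implicit.
Unset Printing Implicit Defensive.

Import GRing.Theory.
Local Open Scope ring_scope.

Section LinearMaps.
Variables (K : fieldType) (V U : lmodType K) (g : V -> U).
Hypothesis g_lin : lin g.

Lemma lin0 : g 0 = 0.
Proof.
have := g_lin 1 0 0; rewrite !scale1r !addr0 => g00.
by apply: (@addrI _ (g 0)); rewrite addr0 -g00.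
Qed.

Lemma linD x y : g (x + y) = g x + g y.
Proof. by have := g_lin 1 x y; rewrite !scale1r. Qed.

Lemma linZ a x : g (a *: x) = a *: g x.
Proof. by have := g_lin a x 0; rewrite lin0 !addr0. Qed.

Lemma linB x y : g (x - y) = g x - g y.
Proof. by rewrite linD -scaleN1r linZ scaleN1r. Qed.

Lemma lin_comb (g' : V -> U) a : lin g' -> lin (fun v => a *: g v + g' v).
Proof.
move=> g'_lin b x y; rewrite g_lin g'_lin !scalerDr !scalerA [b * a]mulrC.
by rewrite addrACA.
Qed.

End LinearMaps.

Lemma bilin_comb (K : fieldType) (V W U : lmodType K) (f f' : V -> W -> U) a :
  bilin f -> bilin f' -> bilin (fun v w => a *: f v w + f' v w).
Proof. by move=> [fl fr] [f'l f'r]; split=> [w|v]; apply: lin_comb. Qed.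

Section TensorProducts.
Variables (K : fieldType) (V W : lmodType K) (T : tensor_product V W).

Lemma tp_linl w : lin (fun v => tp_mul T v w).
Proof. exact: (tp_bilin T).1. Qed.

Lemma tp_linr v : lin (tp_mul T v).
Proof. exact: (tp_bilin T).2. Qed.

Lemma tp_mul0l w : tp_mul T 0 w = 0. Proof. exact: (lin0 (tp_linl w)). Qed.
Lemma tp_mul0r v : tp_mul T v 0 = 0. Proof. exact: (lin0 (tp_linr v)). Qed.
Lemma tp_mulDl x y w : tp_mul T (x + y) w = tp_mul T x w + tp_mul T y w.
Proof. exact: (linD (tp_linl w)). Qed.
Lemma tp_mulBl x y w : tp_mul T (x - y) w = tp_mul T x w - tp_mul T y w.
Proof. exact: (linB (tp_linl w)). Qed.
Lemma tp_mulBr v x y : tp_mul T v (x - y) = tp_mul T v x - tp_mul T v y.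
Proof. exact: (linB (tp_linr v)). Qed.

Variables (U : lmodType K) (f : V -> W -> U).
Hypothesis f_bilin : bilin f.

Lemma tliftP : lin (tlift (T:=T) f) /\ forall v w, tlift (T:=T) f (tp_mul T v w) = f v w.
Proof.
have [g [gP _]] := tp_univ T f_bilin.
exact: (epsilon_spec _ (fun g => lin g /\ forall v w, g (tp_mul T v w) = f v w)
                    (ex_intro _ g gP)).
Qed.

Lemma tlift_lin : lin (tlift (T:=T) f). Proof. exact: tliftP.1. Qed.

Lemma tlift_tp v w : tlift (T:=T) f (tp_mul T v w) = f v w. Proof. exact: tliftP.2. Qed.

Lemma tlift_unique (g : T -> U) :
  lin g -> (forall v w, g (tp_mul T v w) = f v w) -> g =1 tlift (T:=T) f.
Proof.
move=> g_lin gf t; have [g0 [_ g0_unique]] := tp_univ T f_bilin.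
by rewrite -(g0_unique g (conj g_lin gf)) -(g0_unique _ tliftP).
Qed.

End TensorProducts.

Section TliftCombinations.
Variables (K : fieldType) (V W : lmodType K) (T : tensor_product V W).
Variables (U : lmodType K).

Lemma tlift_comb (f f' : V -> W -> U) a t : bilin f -> bilin f' ->
  tlift (T:=T) (fun v w => a *: f v w + f' v w) t
  = a *: tlift (T:=T) f t + tlift (T:=T) f' t.
Proof.
move=> f_bilin f'_bilin; symmetry.
apply: (tlift_unique (bilin_comb a f_bilin f'_bilin)
         (g := fun t => a *: tlift (T:=T) f t + tlift (T:=T) f' t)).
  by apply: lin_comb; apply: tlift_lin.
by move=> v w; rewrite !tlift_tp.
Qed.

Lemma tlift_lin_param (P : lmodType K) (f : P -> V -> W -> U) t :
  (forall p, bilin (f p)) -> (forall v w, lin (fun p => f p v w)) ->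
  lin (fun p => tlift (T:=T) (f p) t).
Proof.
move=> f_bilin f_lin a p q.
have -> : f (a *: p + q) = (fun v w => a *: f p v w + f q v w).
  apply: functional_extensionality => v; apply: functional_extensionality => w.
  exact: f_lin.
exact: tlift_comb.
Qed.

End TliftCombinations.

Lemma bilin_tp (K : fieldType) (V0 W0 V W : lmodType K) (T : tensor_product V W)
  (f : V0 -> V) (g : W0 -> W) : lin f -> lin g ->
  bilin (fun x y => tp_mul T (f x) (g y)).
Proof.
move=> f_lin g_lin; split=> [w|v] a x y /=.
  by rewrite f_lin (tp_linl T).
by rewrite g_lin (tp_linr T).
Qed.

Section AlgebraTensors.
Variables (K : fieldType) (H : algType K) (T2 : tensor_product H H).

Lemma bilin_mul (f g : H -> H) : lin f -> lin g -> bilin (fun x y => f x * g y).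
Proof.
move=> f_lin g_lin; split=> [w|v] a x y /=.
  by rewrite f_lin mulrDl -scalerAl.
by rewrite g_lin mulrDr -scalerAr.
Qed.

Lemma bilin_tp_mulM a b : bilin (fun c d => tp_mul T2 (a * c) (b * d)).
Proof. by apply: bilin_tp => c x y; rewrite mulrDr scalerAr. Qed.

Lemma bilin_tmul2_partial t :
  bilin (fun a b => tlift (T:=T2) (fun c d => tp_mul T2 (a * c) (b * d)) t).
Proof.
split=> [w|v].
  apply: (tlift_lin_param (f := fun a c d => tp_mul T2 (a * c) (w * d))).
    by move=> a; apply: bilin_tp_mulM.
  by move=> c d k x y; rewrite mulrDl -scalerAl (tp_linl T2).
apply: (tlift_lin_param (f := fun b c d => tp_mul T2 (v * c) (b * d))).
  by move=> b; apply: bilin_tp_mulM.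
by move=> c d k x y; rewrite mulrDl -scalerAl (tp_linr T2).
Qed.

Lemma tmul2_tp a b c d :
  tmul2 (tp_mul T2 a b) (tp_mul T2 c d) = tp_mul T2 (a * c) (b * d).
Proof.
by rewrite /tmul2 (tlift_tp _ (bilin_tmul2_partial _)) (tlift_tp _ (bilin_tp_mulM a b)).
Qed.

Lemma tmul2_linl (t : T2) : lin (fun s : T2 => tmul2 s t).
Proof. exact: (tlift_lin (bilin_tmul2_partial t)). Qed.

Lemma tmul2_linr (s : T2) : lin (tmul2 s).
Proof.
apply: (tlift_lin_param
  (f := fun t a b => tlift (T:=T2) (fun c d => tp_mul T2 (a * c) (b * d)) t)).
  exact: bilin_tmul2_partial.
move=> a b; exact: (tlift_lin (bilin_tp_mulM a b)).
Qed.

Lemma tmul2Dl (s s' t : T2) : tmul2 (s + s') t = tmul2 s t + tmul2 s' t.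
Proof. exact: (linD (tmul2_linl t)). Qed.

Lemma tmul2Dr (s t t' : T2) : tmul2 s (t + t') = tmul2 s t + tmul2 s t'.
Proof. exact: (linD (tmul2_linr s)). Qed.

Variables (T3 : tensor_product T2 H) (U : lmodType K) (phi : H -> H -> H -> U).
Hypothesis phi_bilin : forall c, bilin (fun a b => phi a b c).
Hypothesis phi_lin : forall a b, lin (phi a b).

Lemma bilin_tlift3_partial : bilin (fun s c => tlift (T:=T2) (fun a b => phi a b c) s).
Proof.
split=> [c|s]; first exact: tlift_lin.
exact: (tlift_lin_param (f := fun c a b => phi a b c)).
Qed.

Lemma tlift3_lin : lin (tlift3 (T3:=T3) phi).
Proof. exact: (tlift_lin bilin_tlift3_partial). Qed.

Lemma tlift3_tp a b c : tlift3 (T3:=T3) phi (tp_mul T3 (tp_mul T2 a b) c) = phi a b c.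
Proof. by rewrite /tlift3 tlift_tp ?tlift_tp //; exact: bilin_tlift3_partial. Qed.

End AlgebraTensors.

Section PrimitiveElements.
Variables (K : fieldType) (H : algType K) (T2 : tensor_product H H).
Variable Delta : H -> T2.
Hypothesis Delta_lin : lin Delta.

Lemma primitive_subspace : subspace (primitive Delta).
Proof.
split; first by rewrite /primitive (lin0 Delta_lin) tp_mul0l tp_mul0r addr0.
move=> a x y Px Py; rewrite /primitive Delta_lin Px Py (tp_linl T2) (tp_linr T2).
by rewrite scalerDr addrACA.
Qed.

Lemma tlift_Delta_primitive (U : lmodType K) (f : H -> H -> U) x :
  bilin f -> primitive Delta x -> tlift (T:=T2) f (Delta x) = f x 1 + f 1 x.
Proof. by move=> f_bilin ->; rewrite (linD (tlift_lin f_bilin)) !tlift_tp. Qed.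

Hypothesis Delta_mul : forall x y, Delta (x * y) = tmul2 (Delta x) (Delta y).

Lemma Delta_mul_primitive x y : primitive Delta x -> primitive Delta y ->
  Delta (x * y) = tp_mul T2 (x * y) 1 + tp_mul T2 1 (x * y)
                  + (tp_mul T2 x y + tp_mul T2 y x).
Proof.
move=> Px Py; rewrite Delta_mul Px Py !tmul2Dl !tmul2Dr !tmul2_tp !mulr1 !mul1r.
by rewrite [LHS](AC (2*2) (1*4*(2*3))).
Qed.

Lemma primitive_comm x y :
  primitive Delta x -> primitive Delta y -> primitive Delta (comm x y).
Proof.
move=> Px Py; rewrite /primitive /comm (linB Delta_lin).
rewrite !Delta_mul_primitive // opprD addrACA [tp_mul T2 y x + _]addrC subrr addr0.
by rewrite tp_mulBl tp_mulBr opprD addrACA.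
Qed.

Hypothesis Delta1 : Delta 1 = tp_mul T2 1 1.
Variable T3 : tensor_product T2 H.

Lemma Delta2_1 : Delta2 T3 Delta 1 = tp_mul T3 (tp_mul T2 1 1) 1.
Proof. by rewrite /Delta2 Delta1 tlift_tp ?Delta1 //; exact: bilin_tp. Qed.

Lemma Delta2_primitive x : primitive Delta x ->
  Delta2 T3 Delta x = tp_mul T3 (tp_mul T2 x 1) 1 + tp_mul T3 (tp_mul T2 1 x) 1
                      + tp_mul T3 (tp_mul T2 1 1) x.
Proof.
move=> Px; rewrite /Delta2 tlift_Delta_primitive //; last exact: bilin_tp.
by rewrite Px Delta1 tp_mulDl.
Qed.

Variable eps : H -> K.
Hypothesis eps_lin : forall a x y, eps (a *: x + y) = a * eps x + eps y.
Hypothesis eps1 : eps 1 = 1.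
Hypothesis counitl : forall h, tlift (T:=T2) (fun x y => eps x *: y) (Delta h) = h.

Lemma primitive_counit x : primitive Delta x -> eps x = 0.
Proof.
move=> Px; have eps_bilin : bilin (fun x y : H => eps x *: y).
  split=> [w|v] a y z /=; first by rewrite eps_lin scalerDl scalerA.
  by rewrite scalerDr !scalerA mulrC.
have := counitl x; rewrite tlift_Delta_primitive // eps1 scale1r.
rewrite -[RHS]add0r => /addIr/eqP.
by rewrite scaler_eq0 oner_eq0 orbF => /eqP.
Qed.

Variable S : H -> H.
Hypothesis S_lin : lin S.
Hypothesis antipodel :
  forall h, tlift (T:=T2) (fun x y => S x * y) (Delta h) = (eps h)%:A.

Lemma antipode1 : S 1 = 1.
Proof.
have := antipodel 1; rewrite Delta1 tlift_tp; last exact: bilin_mul.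
by rewrite eps1 scale1r mulr1.
Qed.

Lemma primitive_antipode x : primitive Delta x -> S x = - x.
Proof.
move=> Px; have := antipodel x.
rewrite tlift_Delta_primitive //; last exact: bilin_mul.
rewrite primitive_counit // scale0r antipode1 mulr1 mul1r.
by move/eqP; rewrite addr_eq0 => /eqP.
Qed.

Variable R : H -> H.
Hypothesis R_lin : lin R.
Hypothesis R_comult :
  forall h, Delta (R h) = tlift (T:=T2) (fun x y => tp_mul T2 (R x) (R y)) (Delta h).
Hypothesis R_counit : forall h, eps (R h) = eps h.
Hypothesis antipoder :
  forall h, tlift (T:=T2) (fun x y => x * S y) (Delta h) = (eps h)%:A.
Hypothesis RB : forall h t,
  R h * R t = R (tlift3 (fun a b c => a * R b * t * S (R c)) (Delta2 T3 Delta h)).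

Lemma bilin_RB_kernel t c : bilin (fun a b => a * R b * t * S (R c)).
Proof.
split=> [w|v] k x y /=; first by rewrite !mulrDl -!scalerAl.
by rewrite R_lin mulrDr -scalerAr !mulrDl -!scalerAl.
Qed.

Lemma lin_RB_kernel t a b : lin (fun c => a * R b * t * S (R c)).
Proof. by move=> k x y; rewrite R_lin S_lin mulrDr -scalerAr. Qed.

Lemma RB_unit : R 1 = 1.
Proof.
have DeltaR1 : Delta (R 1) = tp_mul T2 (R 1) (R 1).
  by rewrite R_comult Delta1 tlift_tp //; exact: bilin_tp.
have SR1_R1 : S (R 1) * R 1 = 1.
  have := antipodel (R 1); rewrite DeltaR1 tlift_tp; last exact: bilin_mul.
  by rewrite R_counit eps1 scale1r.
have R1_SR1 : R 1 * S (R 1) = 1.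
  have := antipoder (R 1); rewrite DeltaR1 tlift_tp; last exact: bilin_mul.
  by rewrite R_counit eps1 scale1r.
have R1_idem : R 1 * R 1 = R 1.
  rewrite RB Delta2_1 (tlift3_tp T3 (bilin_RB_kernel 1) (lin_RB_kernel 1)).
  by rewrite mul1r mulr1 R1_SR1.
have : S (R 1) * (R 1 * R 1) = S (R 1) * R 1 by rewrite R1_idem.
by rewrite mulrA SR1_R1 mul1r.
Qed.

Lemma primitive_RB x : primitive Delta x -> primitive Delta (R x).
Proof.
move=> Px; rewrite /primitive R_comult tlift_Delta_primitive ?RB_unit //.
exact: bilin_tp.
Qed.

Lemma RB_mul_primitive x y : primitive Delta x -> primitive Delta y ->
  R x * R y = R (x * y + R x * y - y * R x).
Proof.
move=> Px Py.
have kernel_lin := tlift3_lin (T3:=T3) (bilin_RB_kernel y) (lin_RB_kernel y).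
rewrite RB Delta2_primitive // !(linD kernel_lin).
rewrite !(tlift3_tp T3 (bilin_RB_kernel y) (lin_RB_kernel y)).
by rewrite RB_unit antipode1 (primitive_antipode (primitive_RB Px)) !mulr1 !mul1r mulrN.
Qed.

Lemma RB_comm_primitive x y : primitive Delta x -> primitive Delta y ->
  comm (R x) (R y) = R (comm (R x) y + comm x (R y) + comm x y).
Proof.
move=> Px Py; rewrite /comm !RB_mul_primitive // -(linB R_lin); congr R.
by rewrite opprB opprD !addrA (ACl (2*3*4*6*1*5)).
Qed.

End PrimitiveElements.

Lemma subspaceI (K : fieldType) (V : lmodType K) (P Q : V -> Prop) :
  subspace P -> subspace Q -> subspace (fun x => P x /\ Q x).
Proof.
move=> [P0 PD] [Q0 QD]; split=> // a x y [Px Qx] [Py Qy].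
by split; [exact: PD | exact: QD].
Qed.

Section RestrictedFiltration.
Variables (K : fieldType) (H : algType K) (g : H -> Prop) (F : nat -> H -> Prop).
Variable R : H -> H.
Hypothesis g_subspace : subspace g.
Hypothesis g_comm : forall x y, g x -> g y -> g (comm x y).
Hypothesis g_R : forall x, g x -> g (R x).
Hypothesis R_lin : lin R.
Hypothesis RB_comm : forall x y, g x -> g y ->
  comm (R x) (R y) = R (comm (R x) y + comm x (R y) + comm x y).
Hypothesis F_subspace : forall n, subspace (F n).
Hypothesis F_decr : forall n x, F n.+1 x -> F n x.
Hypothesis F_mul : forall i j x y, F i x -> F j y -> F (i + j)%N (x * y).
Hypothesis g_F1 : forall x, g x -> F 1%N x.
Hypothesis F_R : forall n x, F n x -> F n (R x).

Lemma F_comm n m x y : F n x -> F m y -> F (n + m)%N (comm x y).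
Proof.
move=> Fx Fy; rewrite /comm -scaleN1r addrC.
by apply: (F_subspace _).2; [rewrite addnC|]; exact: F_mul.
Qed.

Lemma filtered_RB_Lie_sub_restrict :
  is_filtered_RB_Lie_sub g (fun n x => F n x /\ g x) R.
Proof.
split=> //; split=> //; split=> [n _|].
  by split=> [|x []//]; exact: subspaceI.
split=> [x gx|]; first by split=> //; exact: g_F1.
split=> [n x _ [Fx gx]|]; first by split=> //; exact: F_decr.
split=> [n m x y _ _ [Fx gx] [Fy gy]|]; first by split; [exact: F_comm | exact: g_comm].
split=> //; split=> [a x y _ _|]; first exact: R_lin.
split=> // n x _ [Fx gx]; split; [exact: F_R | exact: g_R].
Qed.

End RestrictedFiltration.

Theorem proposition4p7 (K : fieldType) (H : algType K)
  (T2 : tensor_product H H) (T3 : tensor_product T2 H)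
  (Delta : H -> T2) (eps : H -> K) (S : H -> H)
  (F : nat -> H -> Prop) (R : H -> H) :
  [pchar K] =i pred0 ->
  is_filtered_RB_hopf T3 Delta eps S F R ->
  (forall x, primitive Delta x -> primitive Delta (R x)) /\
  is_filtered_RB_Lie_sub (primitive Delta)
    (fun n x => F n x /\ primitive Delta x) R.
Proof.
move=> _ [[hopf [F_sub [_ [F_decr [F_mul [_ [_ [_ F_ker]]]]]]]]
          [[_ [_ [R_lin [R_comult [R_counit RB]]]]] F_R]].
case: hopf => [Delta_lin [eps_lin [S_lin [_ [counitl [_ [Delta1 [Delta_mul
                 [eps1 [_ [antipodel antipoder]]]]]]]]]]].
have primitive_R := primitive_RB Delta_lin Delta1 eps1 S_lin antipodel
                        R_lin R_comult R_counit antipoder RB.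
split=> //; apply: filtered_RB_Lie_sub_restrict => //.
- exact: primitive_subspace.
- exact: primitive_comm.
- exact: (RB_comm_primitive Delta_lin Delta1 eps_lin eps1 counitl S_lin antipodel
            R_lin R_comult R_counit antipoder RB).
- by move=> x Px; apply/F_ker; exact: (primitive_counit eps_lin).
Qed.
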